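(* Let $\Phi=\{\varphi_i\}_{i\in\Lambda}$ be a similarity IFS in $\mathbb{R}^d$ with attractor $K$, let $F\subset\mathbb{R}^d$ be a nonempty compact set with $\varphi_iF\subseteq F$ for all $i\in\Lambda$, and let $c>0$. (1) If $\Phi$ is $(F,c)$-diffuse, then $\Phi$ is $(K,c)$-diffuse. (2) If $\Phi$ is $(K,c)$-diffuse, then for every $c'\in(0,c)$ and all large enough $n$, the IFS $\{\varphi_i\}_{i\in\Lambda^n}$ is $(F,c')$-diffuse.
   Context: A similarity IFS is a finite family of contracting similarities $\varphi_i$ of $\mathbb{R}^d$; its attractor $K$ is the unique nonempty compact set with $K=\bigcup_i\varphi_iK$; for $i=i_1\dots i_n$, $\varphi_i=\varphi_{i_1}\circ\dots\circ\varphi_{i_n}$. For a compact $F$ with $\varphi_iF\subseteq F$ for all $i$ and $c>0$, an IFS $\{\varphi_i\}_{i\in A}$ is $(F,c)$-diffuse if for every affine hyperplane $\mathcal{L}\subseteq\mathbb{R}^d$ there is $i\in A$ with $\varphi_iF\cap\mathcal{L}^{(c)}=\emptyset$, where $\mathcal{L}^{(c)}$ is the open $c$-neighborhood of $\mathcal{L}$. *)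

From HB Require Import structures.
From mathcomp Require Import all_boot all_order all_algebra.
From mathcomp Require Import all_classical all_reals all_analysis.
Set Implicit Arguments. Unset Strict Implicit. Unset Printing Implicit Defensive.
Import Order.TTheory GRing.Theory Num.Theory.
Import numFieldNormedType.Exports.
Local Open Scope classical_set_scope.
Local Open Scope ring_scope.

Section Defs.
Variables (R : realType) (d : nat).
Notation V := 'rV[R]_d.

Definition edist (x y : V) : R := Num.sqrt (\sum_(i < d) (x 0 i - y 0 i) ^+ 2).

Definition contracting_similarity (f : V -> V) : Prop :=
  exists r : R, 0 < r /\ r < 1 /\ forall x y, edist (f x) (f y) = r * edist x y.

Definition affine_hyperplane (L : set V) : Prop :=
  exists (a : V) (t : R), a != 0 /\ L = [set x | \sum_(i < d) a 0 i * x 0 i = t].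

Definition open_nbhd (L : set V) (c : R) : set V :=
  [set x | exists2 y, L y & edist x y < c].

Definition is_attractor (I : finType) (phi : I -> V -> V) (K : set V) : Prop :=
  [/\ K !=set0, compact K, K = \bigcup_(i in setT) (phi i @` K) &
      forall K' : set V, K' !=set0 -> compact K' ->
        K' = \bigcup_(i in setT) (phi i @` K') -> K' = K].

Definition diffuse (J : Type) (psi : J -> V -> V) (F : set V) (c : R) : Prop :=
  forall L : set V, affine_hyperplane L ->
    exists j : J, psi j @` F `&` open_nbhd L c = set0.

Definition word_map (I : Type) (phi : I -> V -> V) (w : seq I) : V -> V :=
  foldr (fun i f => phi i \o f) id w.

End Defs.

From Pilot Require Import Defs.
From HB Require Import structures.
From mathcomp Require Import all_boot all_order all_algebra.
From mathcomp Require Import all_classical all_reals all_analysis.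
From mathcomp Require Import ring lra.
Import Order.TTheory GRing.Theory Num.Theory.
Import numFieldNormedType.Exports.
Local Open Scope classical_set_scope.
Local Open Scope ring_scope.
Local Notation edist := Pilot.Defs.edist.

(* The maps contract distances by a common factor q < 1, so for a word w of
   length n and points a, b of compact sets A, B, the points phi_w a and
   phi_w b are within q^n D, where D bounds the distances between A and B.
   Writing x in K as phi_w k with w long, the point phi_w f of F is close to x;
   F being closed, K is contained in F, and (F,c)-diffuseness passes to K.
   Conversely, if phi_i K misses the c-neighbourhood of L, then for large n the
   image of F under i^n lies within c - c' of that of K, which is inside
   phi_i K, so it misses the c'-neighbourhood. *)

Section CauchySchwarz.
Context {R : rcfType} {I : finType} (a b : I -> R).

Lemma sum_sqr_ge0 (f : I -> R) : 0 <= \sum_i f i ^+ 2.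
Proof. by apply: sumr_ge0 => i _; exact: sqr_ge0. Qed.

Lemma sum_mul_le_sqrt_sum_sqr :
  \sum_i a i * b i <= Num.sqrt (\sum_i a i ^+ 2) * Num.sqrt (\sum_i b i ^+ 2).
Proof.
set A := \sum_i a i ^+ 2; set B := \sum_i b i ^+ 2; set S := \sum_i a i * b i.
have lagrange : \sum_i \sum_j (a i * b j - a j * b i) ^+ 2 = 2 * (A * B - S ^+ 2).
  have expand i j : (a i * b j - a j * b i) ^+ 2 =
      a i ^+ 2 * b j ^+ 2 + b i ^+ 2 * a j ^+ 2 - 2 * (a i * b i * (a j * b j)).
    by ring.
  under eq_bigr do under eq_bigr do rewrite expand.
  have -> : 2 * (A * B - S ^+ 2) = A * B + B * A - 2 * (S * S) by ring.
  rewrite !big_distrlr /= -!big_split /= mulr_sumr -sumrB.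
  by apply: eq_bigr => i _; rewrite mulr_sumr -big_split -sumrB.
have SAB : S ^+ 2 <= A * B.
  have : 0 <= \sum_i \sum_j (a i * b j - a j * b i) ^+ 2.
    by apply: sumr_ge0 => i _; exact: sum_sqr_ge0.
  by rewrite lagrange pmulr_rge0 // subr_ge0.
rewrite -sqrtrM ?sum_sqr_ge0 //; apply: le_trans (ler_norm S) _.
by rewrite -sqrtr_sqr ler_wsqrtr.
Qed.

Lemma sqrt_sum_sqrD_le :
  Num.sqrt (\sum_i (a i + b i) ^+ 2) <=
  Num.sqrt (\sum_i a i ^+ 2) + Num.sqrt (\sum_i b i ^+ 2).
Proof.
have s0 := sqrtr_ge0 (\sum_i a i ^+ 2); have t0 := sqrtr_ge0 (\sum_i b i ^+ 2).
rewrite -[leRHS]ger0_norm ?addr_ge0 // -sqrtr_sqr ler_wsqrtr //.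
rewrite sqrrD !sqr_sqrtr ?sum_sqr_ge0 //.
under eq_bigr do rewrite sqrrD.
rewrite !big_split /= lerD2r lerD2l mulr2n.
by rewrite lerD // sum_mul_le_sqrt_sum_sqr.
Qed.

End CauchySchwarz.

Section EuclideanDistance.
Context {R : realType} {d : nat}.
Implicit Types (x y z : 'rV[R]_d) (A B : set 'rV[R]_d).

Lemma edist_ge0 x y : 0 <= edist x y.
Proof. exact: sqrtr_ge0. Qed.

Lemma edist_triangle x y z : edist x z <= edist x y + edist y z.
Proof.
rewrite /edist; under eq_bigr => i _ do rewrite -(subrK (y 0 i) (x 0 i)) -addrA.
exact: sqrt_sum_sqrD_le.
Qed.

Lemma normr_sub_le_edist x y : `|x - y| <= edist x y.
Proof.
rewrite [leLHS]/Num.norm /= mx_normrE.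
apply: bigmax_le => [|[i j] _]; first exact: edist_ge0.
rewrite /= !mxE ord1 -sqrtr_sqr ler_wsqrtr // (bigD1 j) //= lerDl.
by apply: sumr_ge0 => k _; exact: sqr_ge0.
Qed.

Lemma edist_le_normr x y : edist x y <= Num.sqrt d%:R * `|x - y|.
Proof.
rewrite -[X in _ * X]ger0_norm // -sqrtr_sqr -sqrtrM // ler_wsqrtr //.
rewrite mulr_natl -[X in _ *+ X]card_ord -sumr_const; apply: ler_sum => i _.
have : `|(x - y) 0 i| <= `|x - y|.
  rewrite [leRHS]/Num.norm /= mx_normrE.
  exact: (le_bigmax _ (fun ij => `|(x - y) ij.1 ij.2|) (0, i)).
rewrite !mxE ler_norml => /andP[? ?]; nra.
Qed.

Lemma edist_bounded [A B] :
  compact A -> compact B -> exists D, forall x y, A x -> B y -> edist x y <= D.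
Proof.
move=> /compact_bounded [MA [_ HA]] /compact_bounded [MB [_ HB]].
exists (Num.sqrt d%:R * ((MA + 1) + (MB + 1))) => x y Ax By.
apply: le_trans (edist_le_normr x y) _; rewrite ler_wpM2l //.
apply: le_trans (ler_normB x y) _; apply: lerD.
- by apply: HA Ax; rewrite ltrDl.
- by apply: HB By; rewrite ltrDl.
Qed.

End EuclideanDistance.

Section WordMaps.
Context {R : realType} {d : nat} {I : Type} {phi : I -> 'rV[R]_d -> 'rV[R]_d}.

Lemma word_map_lipschitz [q] : 0 <= q ->
    (forall i x y, edist (phi i x) (phi i y) <= q * edist x y) ->
  forall w x y, edist (word_map phi w x) (word_map phi w y) <= q ^+ size w * edist x y.
Proof.
move=> q0 phi_q; elim=> [|i w IHw] x y /=; first by rewrite mul1r.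
by rewrite exprS -mulrA (le_trans (phi_q _ _ _)) // ler_wpM2l.
Qed.

Lemma word_map_invariant [A : set 'rV[R]_d] :
  (forall i, phi i @` A `<=` A) -> forall w, word_map phi w @` A `<=` A.
Proof.
move=> phiA; elim=> [|i w IHw] _ [x Ax <-] //=.
exact/phiA/imageP/IHw/imageP.
Qed.

Lemma self_similar_invariant [K : set 'rV[R]_d] :
  K = \bigcup_(i in setT) (phi i @` K) -> forall i, phi i @` K `<=` K.
Proof. by move=> KE i _ [x Kx <-]; rewrite KE; exists i => //; exists x. Qed.

Lemma self_similar_word_decomp [K : set 'rV[R]_d] :
    K = \bigcup_(i in setT) (phi i @` K) ->
  forall n x, K x -> exists2 w : seq I, size w = n & (word_map phi w @` K) x.
Proof.
move=> KE; elim=> [|n IHn] x Kx; first by exists [::]; last exists x.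
move: Kx; rewrite {1}KE => -[i _ [y Ky <-]].
have [w <- [k Kk <-]] := IHn y Ky.
by exists (i :: w); last exists k.
Qed.

End WordMaps.

Section SimilarityIFS.
Context {R : realType} {d : nat} {I : finType} {phi : I -> 'rV[R]_d -> 'rV[R]_d}.
Hypothesis phi_sim : forall i, contracting_similarity (phi i).

Lemma uniform_contraction_ratio :
  exists2 q : R, 0 <= q < 1 & forall i x y, edist (phi i x) (phi i y) <= q * edist x y.
Proof.
have [r r_ratio] := choice phi_sim.
exists (\big[Num.max/0]_i r i) => [|i x y].
  by rewrite bigmax_ge_id /=; apply: bigmax_lt => // i _; have [_ []] := r_ratio i.
have [_ [_ ->]] := r_ratio i.
by rewrite ler_wpM2r ?edist_ge0 // (le_bigmax _ r i).
Qed.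

Lemma eventually_word_map_dist_lt [A B : set 'rV[R]_d] [e] :
    compact A -> compact B -> 0 < e ->
  exists N, forall w, (N <= size w)%N ->
    forall a b, A a -> B b -> edist (word_map phi w a) (word_map phi w b) < e.
Proof.
move=> cA cB e0.
have [q /andP[q0 q1] phi_q] := uniform_contraction_ratio.
have [D AB_D] := edist_bounded cA cB.
have D1_gt0 : 0 < `|D| + 1 by rewrite ltr_wpDl.
have normq1 : `|q| < 1 by rewrite ger0_norm.
have eD0 : 0 < e / (`|D| + 1) by rewrite divr_gt0.
have [N _ qN] := cvgr_lt 0 (cvg_expr normq1) _ eD0.
exists N => w Nw a b Aa Bb.
apply: le_lt_trans (word_map_lipschitz q0 phi_q w a b) _.
have := qN _ Nw; rewrite /= ltr_pdivlMr //; apply: le_lt_trans.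
rewrite ler_wpM2l ?exprn_ge0 // (le_trans (AB_D _ _ Aa Bb)) //.
by rewrite (le_trans (ler_norm D)) // lerDl.
Qed.

Lemma attractor_sub_invariant [K F : set 'rV[R]_d] :
    is_attractor phi K -> F !=set0 -> compact F ->
  (forall i, phi i @` F `<=` F) -> K `<=` F.
Proof.
move=> [_ cK KE _] [f0 Ff0] cF phiF x Kx.
apply: (compact_closed (@norm_hausdorff _ _) cF) => B /nbhs_ballP[e /= e0 eB].
have [N close] := eventually_word_map_dist_lt cK cF e0.
have [w Nw [k Kk kx]] := self_similar_word_decomp KE N _ Kx.
exists (word_map phi w f0); split; first exact/(word_map_invariant phiF)/imageP.
apply/eB; rewrite -ball_normE /= -kx; apply: le_lt_trans (normr_sub_le_edist _ _) _.
by apply: close; rewrite ?Nw.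
Qed.

End SimilarityIFS.

Section Diffuse.
Context {R : realType} {d : nat}.
Implicit Types (A B L : set 'rV[R]_d) (c : R).

Lemma diffuse_subset (J : Type) (psi : J -> 'rV[R]_d -> 'rV[R]_d) A B c :
  A `<=` B -> diffuse psi B c -> diffuse psi A c.
Proof.
move=> AB psiB L /psiB[j psiB_L]; exists j.
rewrite -subset0 -psiB_L => _ [[a Aa <-] La]; split=> //.
exact/imageP/AB.
Qed.

Lemma open_nbhd_disjoint_near [A B L c] [c' : R] :
  B `&` open_nbhd L c = set0 ->
  (forall a, A a -> exists2 b, B b & edist b a < c - c') ->
  A `&` open_nbhd L c' = set0.
Proof.
move=> BL AB; rewrite -subset0 => a [Aa [y Ly ay]].
have [b Bb ba] := AB a Aa.
suff : (B `&` open_nbhd L c) b by rewrite BL.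
split=> //; exists y => //; apply: le_lt_trans (edist_triangle b a y) _.
by rewrite -(subrK c' c) ltrD.
Qed.

End Diffuse.

Theorem lemma3p8 (R : realType) (d : nat) (I : finType)
  (phi : I -> 'rV[R]_d -> 'rV[R]_d) (K F : set 'rV[R]_d) (c : R) :
  (forall i, contracting_similarity (phi i)) ->
  is_attractor phi K ->
  F !=set0 -> compact F ->
  (forall i, phi i @` F `<=` F) ->
  0 < c ->
  (diffuse phi F c -> diffuse phi K c) /\
  (diffuse phi K c ->
     forall c' : R, 0 < c' -> c' < c ->
       exists N : nat, forall n : nat, (N <= n)%N ->
         diffuse (fun w : n.-tuple I => word_map phi w) F c').
Proof.
move=> phi_sim attrK Fne cF phiF _.
have [[k0 Kk0] cK KE _] := attrK.
split=> [|diffK c' c'0 c'c].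
  exact/diffuse_subset/(attractor_sub_invariant phi_sim attrK Fne cF phiF).
have cc'0 : 0 < c - c' by rewrite subr_gt0.
have [N close] := eventually_word_map_dist_lt phi_sim cK cF cc'0.
exists N.+1 => -[//|n] Nn L /diffK[i phiK_L]; exists (nseq_tuple n.+1 i).
apply: (open_nbhd_disjoint_near phiK_L) => _ [f Ff <-].
exists (word_map phi (nseq n.+1 i) k0).
  exists (word_map phi (nseq n i) k0) => //.
  exact/(word_map_invariant (self_similar_invariant KE))/imageP.
by apply: close; rewrite ?size_nseq ?leqW.
Qed.
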